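(* Let $G$ be a finite group, $q$ a prime, $Q$ a normal $q$-subgroup of $G$, $A$ a $q'$-subgroup of $G$, $\chi\in\mathrm{Irr}(Q)$ and $T=(G,Q,\chi)$. Then there exists a chain $T=T_0,T_1,\dots,T_n$ of triples, each $T_i$ a direct linear reduction of $T_{i-1}$ and $T_n$ a linear limit of $T$, such that for every $i=0,1,\dots,n$ the central character $\zeta^{(T_i)}$ of $T_i$ is $A(\chi)$-invariant.
   Context: $\mathrm{Irr}(X)$, $\mathrm{Lin}(X)$: complex irreducible, resp. linear, characters of $X$; $K(\phi)$ is the stabilizer of $\phi$ in $K$. A triple is $T=(G,N,\psi)$ with $G$ finite, $N\trianglelefteq G$, $\psi\in\mathrm{Irr}(N)$. The center $Z(T)$ is the center $Z(\psi^G)=\{g\in G:|\psi^G(g)|=\psi^G(1)\}$ of $\psi^G$, and the central character $\zeta^{(T)}$ is the unique linear character of $Z(T)$ lying under $\psi^G$. If $L\trianglelefteq G$, $L\le N$, and $\lambda\in\mathrm{Lin}(L)$ lies under $\psi$, the direct linear reduction $T(\lambda)$ is $(G(\lambda),N(\lambda),\psi_\lambda)$, with $\psi_\lambda$ the $\lambda$-Clifford correspondent of $\psi$ (unique irreducible character of $N(\lambda)$ over $\lambda$ inducing $\psi$); it is proper if $T(\lambda)\neq T$. A linear reduction is obtained by a finite chain of direct linear reductions; a linear limit is a linear reduction admitting no proper direct linear reduction. *)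

From HB Require Import structures.
From mathcomp Require Import all_boot all_order all_algebra all_fingroup all_solvable all_field all_character.
Set Implicit Arguments. Unset Strict Implicit. Unset Printing Implicit Defensive.
Import GRing.Theory Num.Theory.
Local Open Scope group_scope.
Local Open Scope ring_scope.

Section Triples.
Variable gT : finGroupType.

Record triple := Triple { tG : {group gT}; tN : {group gT}; tpsi : 'CF(tN) }.

Definition is_triple (T : triple) : Prop :=
  tN T <| tG T /\ tpsi T \in irr (tN T).

Definition triple_eq (T T' : triple) : Prop :=
  [/\ (tG T :=: tG T')%g, (tN T :=: tN T')%g & forall x, tpsi T x = tpsi T' x].

Definition tcenter (T : triple) : {group gT} :=
  [group of ('Z('Ind[tG T] (tpsi T)))%CF].

Definition is_central_char (T : triple) (lam : 'CF(tcenter T)) : Prop :=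
  lam \is a linear_char /\ '['Res[tcenter T] ('Ind[tG T] (tpsi T)), lam] != 0.

(* T' is a direct linear reduction T(lam) of T, for some L <| G, L <= N,
   lam in Lin(L) lying under psi: T' = (G(lam), N(lam), psi_lam), where
   psi_lam is the (unique) irreducible character of N(lam) lying over lam
   and inducing psi. *)
Definition direct_lin_red (T T' : triple) : Prop :=
  exists (L : {group gT}) (lam : 'CF(L)),
    [/\ (L <| tG T)%g, (L \subset tN T)%g, lam \is a linear_char,
        '['Res[L] (tpsi T), lam] != 0 &
        [/\ (tG T' :=: tG T :&: 'I[lam])%g, (tN T' :=: tN T :&: 'I[lam])%g,
            tpsi T' \in irr (tN T'),
            '['Res[L] (tpsi T'), lam] != 0 &
            'Ind[tN T] (tpsi T') = tpsi T]].

Inductive lin_red (T : triple) : triple -> Prop :=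
  | lin_red_refl : lin_red T T
  | lin_red_step T1 T2 : lin_red T T1 -> direct_lin_red T1 T2 -> lin_red T T2.

Definition linear_limit (T T' : triple) : Prop :=
  lin_red T T' /\
  ~ (exists T'' : triple, direct_lin_red T' T'' /\ ~ triple_eq T'' T').

End Triples.

(* Put B := A(chi), a q'-group acting coprimely on the q-group Q.  Along the
   chain we keep a triple (H, N, psi) with N <= Q, B <= H and B fixing psi.  If
   a proper direct linear reduction along lam exists, Glauberman's lemma
   (Clifford's theorem plus Schur-Zassenhaus conjugacy) gives an N-conjugate of
   lam fixed by B; reducing along it is still proper, and B fixes the Clifford
   correspondent by its uniqueness, so the invariant survives while |H| drops.
   Finally the central character of (H, N, psi) is H-invariant, hence
   B-invariant. *)

From mathcomp Require Import all_boot all_order all_algebra all_fingroup all_solvable all_field all_character.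
From Stdlib Require Import Classical_Prop.
Set Implicit Arguments. Unset Strict Implicit. Unset Printing Implicit Defensive.
Import GRing.Theory Num.Theory.
Local Open Scope group_scope.

Section CoprimeCover.
Variables (gT : finGroupType) (N B I : {group gT}).
Hypotheses (solN : solvable N) (coNB : coprime #|N| #|B|) (nNB : B \subset 'N(N)).

Lemma SchurZassenhaus_conj_sub :
  I * N = N * B -> exists2 x, x \in N & B :^ x \subset I.
Proof.
move=> eIN_NB; have eNB : N * B = (N <*> B)%G by rewrite /= norm_joinEr.
have sINB : I \subset N * B by rewrite -eIN_NB mulG_subl.
pose M := (N :&: I)%G.
have sMI : M \subset I := subsetIr N I.
have oI : #|I| = (#|B| * #|M|)%N.
  apply/eqP; rewrite -(eqn_pmul2r (cardG_gt0 N)) mul_cardG eIN_NB.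
  by rewrite (TI_cardMg (coprime_TIg coNB)) setIC -mulnA mulnC.
have hallM : Hall I M.
  rewrite /Hall sMI -divgS // oI mulnK //.
  exact: coprimeSg (subsetIl N I) coNB.
have nsMI : M <| I.
  have nsN : N <| N <*> B by rewrite normalYl.
  by rewrite /M /= setIC (normalGI _ nsN) // -eNB.
have /splitsP[C /complP[tiMC eMC]] := SchurZassenhaus_split hallM nsMI.
have oC : #|C| = #|B|.
  by apply/eqP; rewrite -(eqn_pmul2l (cardG_gt0 M)) -TI_cardMg // eMC oI mulnC.
have sCNB : C \subset N * B by rewrite (subset_trans _ sINB) // -eMC mulG_subr.
have [x Nx eC] := SchurZassenhaus_trans_sol solN nNB sCNB coNB oC.
by exists x; rewrite // -eC -eMC mulG_subr.
Qed.

End CoprimeCover.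

Local Open Scope ring_scope.

Lemma constt_Res_conjg (gT : finGroupType) (N L : {group gT}) (r : Iirr N)
    (t k : Iirr L) :
  L <| N -> t \in irr_constt ('Res 'chi_r) -> k \in irr_constt ('Res 'chi_r) ->
  exists2 y, y \in N & 'chi_k = ('chi_t ^ y)%CF.
Proof.
move=> nsLN rt rk; have Nt : r \in irr_constt ('Ind[N] 'chi_t).
  by rewrite constt_Ind_Res.
have : k \in irr_constt ('Res[L] ('Ind[N] 'chi_t)).
  by apply: (constt_Res_trans _ Nt); rewrite ?cfInd_char ?irr_char.
rewrite irr_consttE cfResInd // cfdotZl cfdot_suml mulf_eq0 negb_or.
case/andP=> _ nz_sum.
have /exists_inP[y Ny] : [exists y in N, '['chi_t ^ y, 'chi_k]%CF != 0].
  rewrite -negb_forall_in; apply: contra nz_sum => /forall_inP nz_y.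
  by rewrite big1 // => y /nz_y/eqP.
rewrite -conjg_IirrE cfdot_irr pnatr_eq0; case: (conjg_Iirr t y =P k) => // <- _.
by exists y; rewrite // conjg_IirrE.
Qed.

Section CoprimeStableConstituent.
Variables (gT : finGroupType) (N L B : {group gT}) (psi : 'CF(N)) (t : Iirr L).
Hypotheses (nsLN : L <| N) (solN : solvable N) (coNB : coprime #|N| #|B|).
Hypotheses (nLB : B \subset 'N(L)) (IBpsi : B \subset 'I[psi]).
Hypotheses (irr_psi : psi \in irr N) (psi_t : t \in irr_constt ('Res[L] psi)).

Let nNB : B \subset 'N(N) := subset_trans IBpsi (norm_inertia psi).

Lemma conjg_constt_Res_inertia b :
  b \in B -> exists2 y, y \in N & (b * y^-1)%g \in 'I['chi_t].
Proof.
move=> Bb; have nLb := subsetP nLB b Bb; have [r Dpsi] := irrP irr_psi.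
have psi_tb : conjg_Iirr t b \in irr_constt ('Res[L] psi).
  rewrite irr_consttE conjg_IirrE -(inertiaJ (subsetP IBpsi b Bb)).
  by rewrite -cfConjgRes_norm ?(subsetP nNB) // cfConjg_iso -irr_consttE.
move: psi_t psi_tb; rewrite Dpsi => r_t r_tb.
have [y Ny Dtb] := constt_Res_conjg nsLN r_t r_tb.
have nLy := subsetP (normal_norm nsLN) y Ny.
exists y => //; rewrite inE groupM ?groupV //= cfConjgMnorm ?groupV //.
by rewrite -conjg_IirrE Dtb cfConjgK.
Qed.

Lemma coprime_stable_constt_Res :
  exists2 x, x \in N & B \subset 'I['chi_t ^ x]%CF.
Proof.
pose I := ((N <*> B) :&: 'I['chi_t])%G.
have eNB : (N * B)%g = N <*> B by rewrite norm_joinEr.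
have eIN : (I * N = N * B)%g.
  apply/eqP; rewrite eqEsubset eNB mul_subG ?subsetIl ?joing_subl //=.
  rewrite -eNB -(normC nNB); apply/subsetP=> _ /mulsgP[b n Bb Nn ->].
  have [y Ny Iby] := conjg_constt_Res_inertia Bb.
  rewrite -(mulgKV y b) -mulgA mem_mulg ?groupM // inE Iby andbT.
  by rewrite mem_mulg ?groupV.
have [x Nx sBxI] := SchurZassenhaus_conj_sub solN coNB nNB eIN.
have nLx := subsetP (normal_norm nsLN) x Nx.
exists x^-1%g; first by rewrite groupV.
by rewrite -conjg_inertia ?groupV // -sub_conjg (subset_trans sBxI) ?subsetIr.
Qed.

End CoprimeStableConstituent.

Lemma Clifford_corr_exists (gT : finGroupType) (N L : {group gT}) (r : Iirr N)
    (u : Iirr L) :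
  L <| N -> u \in irr_constt ('Res 'chi_r) ->
  exists2 s : Iirr 'I_N['chi_u],
    s \in irr_constt ('Ind 'chi_u) & 'Ind[N] 'chi_s = 'chi_r.
Proof.
move=> nsLN r_u.
have [irr_Ind _ imInd _ _] := constt_Inertia_bijection u nsLN.
have := imInd r; rewrite constt_Ind_Res r_u => /imsetP[s s_u Dr].
by exists s; rewrite // Dr /Ind_Iirr cfIirrE ?irr_Ind.
Qed.

Lemma Clifford_corr_inertia (gT : finGroupType) (N L B : {group gT}) (u : Iirr L)
    (s : Iirr 'I_N['chi_u]) :
  L <| N -> s \in irr_constt ('Ind 'chi_u) ->
  B \subset 'I['Ind[N] 'chi_s] -> B \subset 'I['chi_u] -> B \subset 'I['chi_s].
Proof.
move=> nsLN s_u IB_Ind IB_u.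
have [_ injInd _ _ _] := constt_Inertia_bijection u nsLN.
apply/subsetP=> b Bb; have Iub := subsetP IB_u b Bb.
have nNb := subsetP (norm_inertia _) b (subsetP IB_Ind b Bb).
have nLb := subsetP (norm_inertia _) b Iub.
have nTb : b \in 'N('I_N['chi_u]).
  by rewrite -sub1set normsI ?sub1set // (subsetP (normG _)).
have sb_u : conjg_Iirr s b \in irr_constt ('Ind 'chi_u).
  rewrite constt_Ind_Res irr_consttE conjg_IirrE -cfConjgRes_norm //.
  have -> : '[('Res[L] 'chi_s ^ b)%CF, 'chi_u]
            = '[('Res[L] 'chi_s ^ b)%CF, ('chi_u ^ b)%CF].
    by rewrite (inertiaJ Iub).
  by rewrite cfConjg_iso -irr_consttE -constt_Ind_Res.
have : Ind_Iirr N (conjg_Iirr s b) = Ind_Iirr N s.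
  rewrite /Ind_Iirr conjg_IirrE -cfConjgInd_norm //.
  by rewrite inertiaJ ?(subsetP IB_Ind).
move/(injInd _ _ sb_u s_u) => Esb.
by rewrite inE nTb /= -conjg_IirrE Esb.
Qed.

Lemma proper_direct_lin_red (gT : finGroupType) (T T' : triple gT) :
    is_triple T -> direct_lin_red T T' -> ~ triple_eq T' T ->
  exists (L : {group gT}) (lam : 'CF(L)),
    [/\ L <| tG T, L \subset tN T, lam \is a linear_char,
        '['Res[L] (tpsi T), lam] != 0 & ~~ (tG T \subset 'I[lam])].
Proof.
move=> [nsNG _] [L [lam [nsLG sLN lin_lam psi_lam [eG eN _ _ Dpsi]]]] neqT'.
exists L, lam; split=> //; apply/negP=> sGI; apply: neqT'.
move: T' eG eN Dpsi => [G' N' psi'] /= eG eN Dpsi.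
have sNI := subset_trans (normal_sub nsNG) sGI.
have eN' : N' = tN T by apply: group_inj; rewrite eN; apply/setIidPl.
subst N'; split=> //; first by rewrite eG; apply/setIidPl.
by move=> x; rewrite -Dpsi cfInd_id.
Qed.

Lemma lin_red_chain (gT : finGroupType) (n : nat) (Ts : nat -> triple gT) :
    (forall i, (i < n)%N -> direct_lin_red (Ts i) (Ts i.+1)) ->
  forall k, (k <= n)%N -> lin_red (Ts 0%N) (Ts k).
Proof.
move=> red_Ts; elim=> [|k IHk] le_k_n; first exact: lin_red_refl.
exact: lin_red_step (IHk (ltnW le_k_n)) (red_Ts k le_k_n).
Qed.

Section CentralCharacter.
Variables (gT : finGroupType) (T : triple gT).
Hypothesis triple_T : is_triple T.

Local Notation Phi := ('Ind[tG T] (tpsi T)).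
Local Notation Z := (tcenter T).

Let Phi1_neq0 : Phi 1%g != 0.
Proof.
case: triple_T => /andP[sNG _] /irrP[r ->].
by rewrite char1_eq0 ?cfInd_char ?irr_char // cfInd_eq0 ?irr_char ?irr_neq0.
Qed.

Lemma exists_central_char : exists lam : 'CF(Z), is_central_char lam.
Proof.
have [mu lin_mu Dmu] := cfcenter_Res Phi.
have [k Dk] := irrP (lin_char_irr lin_mu).
by exists mu; split=> //; rewrite Dmu cfdotZl Dk cfnorm_irr mulr1.
Qed.

Lemma central_charE (lam : 'CF(Z)) :
  is_central_char lam -> 'Res[Z] Phi = Phi 1%g *: lam.
Proof.
have [mu lin_mu Dmu] := cfcenter_Res Phi.
have [k Dk] := irrP (lin_char_irr lin_mu).
case=> /lin_char_irr/irrP[j Dlam].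
rewrite Dmu cfdotZl mulf_eq0 negb_or => /andP[_].
by rewrite Dk Dlam cfdot_irr pnatr_eq0; case: (k =P j) => // ->.
Qed.

Lemma central_char_inertia (lam : 'CF(Z)) :
  is_central_char lam -> tG T \subset 'I[lam].
Proof.
move/central_charE=> Dlam; have [sZG nZG] := andP (cfcenter_normal Phi).
apply/subsetP=> g Gg; rewrite inE (subsetP nZG) //=; apply/eqP.
have : ('Res[Z] Phi ^ g)%CF = 'Res[Z] Phi.
  by rewrite cfConjgRes_norm ?(subsetP nZG) ?(subsetP (normG _)) // cfConjg_id.
by rewrite Dlam linearZ; apply: scalerI.
Qed.

End CentralCharacter.

Section StableReduction.
Variables (gT : finGroupType) (Q B : {group gT}).
Hypotheses (solQ : solvable Q) (coQB : coprime #|Q| #|B|).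

Definition stable_triple (T : triple gT) : Prop :=
  [/\ is_triple T, tN T \subset Q, B \subset tG T & B \subset 'I[tpsi T]].

Lemma stable_lin_red_lt (T : triple gT) (L : {group gT}) (lam : 'CF(L)) :
    stable_triple T -> L <| tG T -> L \subset tN T -> lam \is a linear_char ->
    '['Res[L] (tpsi T), lam] != 0 -> ~~ (tG T \subset 'I[lam]) ->
  exists T', [/\ direct_lin_red T T', stable_triple T' & (#|tG T'| < #|tG T|)%N].
Proof.
case: T => H N psi [[/= nsNH irr_psi] sNQ sBH IBpsi] /=.
move=> nsLH sLN lin_lam psi_lam nIH.
have sNH := normal_sub nsNH; have nsLN : L <| N := normalS sLN sNH nsLH.
have [t Dlam] := irrP (lin_char_irr lin_lam); subst lam.
have nLB : B \subset 'N(L) := subset_trans sBH (normal_norm nsLH).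
have [x Nx IBtx] := coprime_stable_constt_Res nsLN (solvableS sNQ solQ)
  (coprimeSg sNQ coQB) nLB IBpsi irr_psi (psi_lam : t \in irr_constt _).
have nLx := subsetP (normal_norm nsLN) x Nx.
pose u := conjg_Iirr t x; have Du : 'chi_u = ('chi_t ^ x)%CF := conjg_IirrE t x.
have psi_u : u \in irr_constt ('Res[L] psi).
  by rewrite irr_consttE Du cfdot_Res_conjg.
have [r Dpsi] := irrP irr_psi; rewrite Dpsi in psi_u.
have [s s_u Ds] := Clifford_corr_exists nsLN psi_u.
exists (@Triple gT (H :&: 'I['chi_u])%G 'I_N['chi_u]%G 'chi_s); split=> /=.
- exists L, 'chi_u; split=> //=; first by rewrite Du cfConjg_lin_char.
  + by rewrite Dpsi -irr_consttE.
  + by rewrite mem_irr Ds Dpsi -irr_consttE -constt_Ind_Res.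
- split=> //=.
  + split; last exact: mem_irr.
    by rewrite /= -{1}(setIidPr sNH) setIAC (normalGI _ nsNH) ?subsetIl.
  + exact: subset_trans (subsetIl _ _) sNQ.
  + by rewrite subsetI sBH Du.
  + by apply: Clifford_corr_inertia s_u _ _; rewrite ?Ds -?Dpsi ?Du.
rewrite proper_card // properE subsetIl /= subsetI subxx /= Du -conjg_inertia //.
by apply: contra nIH; rewrite -sub_conjgV conjGid // groupV (subsetP sNH).
Qed.

Lemma stable_lin_red_chain (T : triple gT) :
    stable_triple T ->
  exists n (Ts : nat -> triple gT),
    [/\ Ts 0%N = T, forall i, (i < n)%N -> direct_lin_red (Ts i) (Ts i.+1),
         forall i, (i <= n)%N -> stable_triple (Ts i)
       & ~ exists T', direct_lin_red (Ts n) T' /\ ~ triple_eq T' (Ts n)].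
Proof.
have [m] := ubnP #|tG T|; elim: m T => // m IHm T /ltnSE le_T_m stable_T.
have [[T' [red_T' neqT']] | limT] :=
  classic (exists T', direct_lin_red T T' /\ ~ triple_eq T' T); last first.
  by exists 0%N, (fun=> T).
have [triple_T _ _ _] := stable_T.
have [L [lam [nsLG sLN lin_lam psi_lam nGI]]] :=
  proper_direct_lin_red triple_T red_T' neqT'.
have [T1 [red_T1 stable_T1 lt_T1]] :=
  stable_lin_red_lt stable_T nsLG sLN lin_lam psi_lam nGI.
have [|n [Ts [Ts0 red_Ts stable_Ts limTs]]] := IHm T1 _ stable_T1.
  exact: leq_trans lt_T1 le_T_m.
exists n.+1, (fun i => if i is j.+1 then Ts j else T).
by split=> // -[|i] //= lt_i; [rewrite Ts0 | apply: red_Ts | apply: stable_Ts].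
Qed.

End StableReduction.

Unset Implicit Arguments.

Theorem proposition6p4 (gT : finGroupType) (G Q A : {group gT}) (q : nat)
    (chi : 'CF(Q)) :
  prime q -> Q <| G -> q.-group Q -> A \subset G -> q^'.-group A ->
  chi \in irr Q ->
  exists (n : nat) (Ts : nat -> triple gT),
    [/\ Ts 0%N = @Triple gT G Q chi,
        (forall i, (i < n)%N -> direct_lin_red (Ts i) (Ts i.+1)),
        linear_limit (@Triple gT G Q chi) (Ts n) &
        forall i, (i <= n)%N ->
          (exists lam : 'CF(tcenter (Ts i)), is_central_char lam) /\
          forall lam : 'CF(tcenter (Ts i)),
            is_central_char lam -> 'I_A[chi] \subset 'I[lam]].
Proof.
move=> _ nsQG qQ sAG qA irr_chi; pose B := 'I_A[chi]%G.
have qB : q^'.-group B := pgroupS (subsetIl A _) qA.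
have stable_T0 : stable_triple Q B (@Triple gT G Q chi).
  split=> //=; last exact: subsetIr.
  exact: subset_trans (subsetIl A _) sAG.
have [n [Ts [Ts0 red_Ts stable_Ts limTs]]] :=
  stable_lin_red_chain (pgroup_sol qQ) (pnat_coprime qQ qB) stable_T0.
exists n, Ts; split=> //.
  rewrite /linear_limit -Ts0; split=> //.
  exact: lin_red_chain red_Ts n (leqnn n).
move=> i le_i_n; have [triple_Ti _ sBG _] := stable_Ts i le_i_n.
split=> [|lam /(central_char_inertia triple_Ti)]; last exact: subset_trans sBG.
exact: exists_central_char.
Qed.
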